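(* Let $R$ be an integral domain which is an avoidance ring, and let $S$ be a ring with $R\subseteq S\subseteq \operatorname{Frac}(R)$. Then $S$ is an avoidance ring.
   Context: All rings are commutative with $1\neq 0$. An ideal $I$ of a ring $R$ has avoidance if whenever $I_1,\ldots,I_n$ are finitely many ideals of $R$ with $I\subseteq\bigcup_{k=1}^n I_k$, then $I\subseteq I_k$ for some $k$. A ring is an avoidance ring if every ideal of it has avoidance. *)

From HB Require Import structures.
From mathcomp Require Import all_boot all_order all_algebra.
From mathcomp Require Export fraction.
Set Implicit Arguments. Unset Strict Implicit. Unset Printing Implicit Defensive.
Import GRing.Theory.
Local Open Scope ring_scope.

Definition is_ideal (T : comNzRingType) (I : T -> Prop) : Prop :=
  [/\ I 0,
      (forall x y, I x -> I y -> I (x + y)),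
      (forall x, I x -> I (- x)) &
      (forall r x, I x -> I (r * x))].

Definition has_avoidance (T : comNzRingType) (I : T -> Prop) : Prop :=
  forall (n : nat) (Is : nat -> T -> Prop),
    (forall k, (k < n)%N -> is_ideal (Is k)) ->
    (forall x, I x -> exists k, (k < n)%N /\ Is k x) ->
    exists k, (k < n)%N /\ (forall x, I x -> Is k x).

Definition avoidance_ring (T : comNzRingType) : Prop :=
  forall I : T -> Prop, is_ideal I -> has_avoidance I.

From HB Require Import structures.
From mathcomp Require Import all_boot all_order all_algebra.
From mathcomp Require Import fraction generic_quotient.
From Stdlib Require Import Classical.
Set Implicit Arguments. Unset Strict Implicit. Unset Printing Implicit Defensive.
Import GRing.Theory.
Local Open Scope ring_scope.
Local Notation "x %:F" := (tofrac x).

(* Suppose an ideal J of S lies in I_0 u ... u I_{n-1} but in none of them,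
   and pick x_k in J \ I_k. Clear the denominators of all g(x_k) by one
   nonzero b in R and contract each ideal I of S to the ideal
   {r in R | r = g(s) b for some s in I} of R. The contraction of J is covered
   by the contractions of the I_k, so by avoidance in R it lies in one of them,
   say the k-th; since s |-> g(s) b is injective, this forces x_k into I_k. *)

Section Denominators.
Variable R : idomainType.

Lemma tofrac_pi (a : R) : a%:F = (\pi_({fraction R}) (Ratio a 1))%qT.
Proof. by rewrite /tofrac; unlock. Qed.

Lemma fraction_denominator (z : {fraction R}) :
  exists a b : R, b != 0 /\ z * b%:F = a%:F.
Proof.
elim/quotW: z => x.
exists \n_x, \d_x; split; first exact: denom_ratioP.
rewrite !tofrac_pi.
change (FracField.mul (\pi_({fraction R}) x) (\pi_({fraction R}) (Ratio \d_x 1))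
  = \pi_({fraction R}) (Ratio \n_x 1))%qT.
rewrite piE; apply/eqmodP; rewrite /= FracField.equivfE /FracField.mulf.
by rewrite !numden_Ratio ?mulf_neq0 ?denom_ratioP ?oner_neq0 // !mulr1 mulrC.
Qed.

Lemma common_denominator (T : Type) (h : T -> {fraction R})
    (P : nat -> T -> Prop) (n : nat) :
  (forall k, (k < n)%N -> exists x, P k x) ->
  exists2 b : R, b != 0 &
    forall k, (k < n)%N -> exists x a, P k x /\ h x * b%:F = a%:F.
Proof.
elim: n => [|n IHn] witness; first by exists 1; rewrite ?oner_neq0.
have [b b_neq0 Hb] := IHn (fun k ltkn => witness k (ltnW ltkn)).
have [x Px] := witness n (ltnSn n).
have [a' [b' [b'_neq0 Hx]]] := fraction_denominator (h x).
exists (b * b'); first by rewrite mulf_neq0.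
move=> k; rewrite ltnS leq_eqVlt => /predU1P[->|ltkn].
  by exists x, (a' * b); rewrite !tofracM mulrCA Hx mulrC.
have [y [a [Py Hy]]] := Hb k ltkn.
by exists y, (a * b'); rewrite tofracM mulrA Hy tofracM.
Qed.

End Denominators.

Section ScaledContraction.
Variables (R : idomainType) (S : comNzRingType).
Variables (f : {rmorphism R -> S}) (g : {rmorphism S -> {fraction R}}).
Hypothesis g_inj : injective g.
Hypothesis gf : forall x : R, g (f x) = x%:F.
Variable b : R.
Hypothesis b_neq0 : b != 0.

Definition scaled_contraction (I : S -> Prop) (r : R) : Prop :=
  exists2 s, I s & g s * b%:F = r%:F.

Lemma is_ideal_scaled_contraction (I : S -> Prop) :
  is_ideal I -> is_ideal (scaled_contraction I).
Proof.
case=> I0 ID IN IM; split.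
- by exists 0; rewrite ?rmorph0 ?mul0r.
- move=> r1 r2 [s Is gs] [t It gt].
  by exists (s + t); rewrite ?rmorphD ?mulrDl ?gs ?gt; auto.
- move=> r1 [s Is gs].
  by exists (- s); rewrite ?rmorphN ?mulNr ?gs; auto.
- move=> r r1 [s Is gs].
  by exists (f r * s); rewrite ?rmorphM ?gf -?mulrA ?gs; auto.
Qed.

Lemma scaled_contractionP (I : S -> Prop) (s : S) (a : R) :
  g s * b%:F = a%:F -> scaled_contraction I a -> I s.
Proof.
move=> gsb [t It gtb]; suff -> : s = t by [].
apply: g_inj; apply: (mulIf (x := b%:F)); first by rewrite tofrac_eq0.
by rewrite gsb gtb.
Qed.

End ScaledContraction.

Theorem theorem3p13 (R : idomainType) (S : comNzRingType)
    (f : {rmorphism R -> S}) (g : {rmorphism S -> {fraction R}}) :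
  injective g ->
  (forall x : R, g (f x) = tofrac x) ->
  avoidance_ring R ->
  avoidance_ring S.
Proof.
move=> g_inj gf avR J idJ n Is idIs cover; apply: NNPP => none.
have witness k : (k < n)%N -> exists x, J x /\ ~ Is k x.
  move=> ltkn; apply: NNPP => notin; apply: none; exists k; split=> // x Jx.
  by apply: NNPP => nIx; apply: notin; exists x.
have [b b_neq0 Hb] := common_denominator g witness.
have [||k [ltkn contr]] :=
  avR _ (is_ideal_scaled_contraction gf b idJ) n
    (fun k => scaled_contraction g b (Is k)).
- move=> k ltkn; exact: (is_ideal_scaled_contraction gf b (idIs k ltkn)).
- move=> r [s Js gsb]; have [k [ltkn Iks]] := cover s Js.
  by exists k; split=> //; exists s.
have [x [a [[Jx nIx] gxb]]] := Hb k ltkn.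
by apply/nIx/(scaled_contractionP g_inj b_neq0 gxb)/contr; exists x.
Qed.
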